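(* Consider Algorithm 1 applied to $\min\varphi(w)$ s.t. $w\in D$, and fix an outer iteration $j$. Then either the inner loop terminates (i.e., some $i$ satisfies the nonmonotone Armijo condition), or $\|\gamma_{j,i}(w^j-w^{j,i})+\nabla\varphi(w^{j,i})-\nabla\varphi(w^j)\|\to0$ as $i\to\infty$. Moreover, if the inner loop does not terminate, then $w^{j,i}\to w^j$ as $i\to\infty$ and $w^j$ is an M-stationary point of this problem, i.e., $0\in\nabla\varphi(w^j)+\mathcal N^{\lim}_D(w^j)$.
   Context: $\mathbb W$ is a Euclidean space, $\varphi\colon\mathbb W\to\mathbb R$ continuously differentiable, $D\subset\mathbb W$ nonempty and closed (neither need be convex). The limiting normal cone at $\bar w\in D$ is $\mathcal N^{\lim}_D(\bar w):=\limsup_{w\to\bar w}\operatorname{cone}(w-\Pi_D(w))$ (outer set limit, $\Pi_D$ the multivalued Euclidean projection onto $D$). Algorithm 1 (general spectral gradient method, without termination test): parameters $\tau>1$, $\sigma\in(0,1)$, $0<\gamma_{\min}\le\gamma_{\max}<\infty$, $m\in\mathbb N$, starting point $w^0\in D$. For $j=0,1,2,\dots$: set $m_j:=\min(j,m)$ and choose $\gamma_j^0\in[\gamma_{\min},\gamma_{\max}]$; for $i=1,2,\dots$ set $\gamma_{j,i}:=\tau^{i-1}\gamma_j^0$ and compute a (global) solution $w^{j,i}$ of $\min_w \varphi(w^j)+\langle\nabla\varphi(w^j),w-w^j\rangle+\frac{\gamma_{j,i}}2\|w-w^j\|^2$ s.t. $w\in D$ (subproblem $Q(j,i)$); the inner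 loop stops at the first $i$ with $\varphi(w^{j,i})\le\max_{r=0,\dots,m_j}\varphi(w^{j-r})+\sigma\langle\nabla\varphi(w^j),w^{j,i}-w^j\rangle$; then set $i_j:=i$, $\gamma_j:=\gamma_{j,i_j}$, $w^{j+1}:=w^{j,i_j}$. *)

From HB Require Import structures.
From mathcomp Require Import all_boot all_order all_algebra.
From mathcomp Require Import all_classical all_reals all_analysis.
Set Implicit Arguments. Unset Strict Implicit. Unset Printing Implicit Defensive.
Import Order.TTheory GRing.Theory Num.Theory.
Import numFieldNormedType.Exports.
Local Open Scope classical_set_scope.
Local Open Scope ring_scope.

Section Defs.
Variables (R : realType) (n : nat).
Local Notation W := 'rV[R]_n.

Definition dotw (u v : W) : R := (u *m v^T) 0 0.
Definition enorm (u : W) : R := Num.sqrt (dotw u u).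

Definition proj (D : set W) (w : W) : set W :=
  [set p | D p /\ forall q, D q -> enorm (w - p) <= enorm (w - q)].

Definition cone (S : set W) : set W :=
  [set v | exists t s, 0 <= t /\ S s /\ v = t *: s].

(* limiting normal cone: outer (Painleve-Kuratowski) limit of cone(w - Pi_D(w)) as w -> wb *)
Definition limnormal (D : set W) (wb : W) : set W :=
  [set v | exists (wk vk : nat -> W),
     wk @ \oo --> wb /\ vk @ \oo --> v /\
     forall k, cone [set wk k - p | p in proj D (wk k)] (vk k)].

Definition Mstationary (g : W -> W) (D : set W) (w : W) : Prop :=
  exists v, limnormal D w v /\ 0 = g w + v.

Definition qmodel (phi : W -> R) (g : W -> W) (wj : W) (gam : R) (x : W) : R :=
  phi wj + dotw (g wj) (x - wj) + gam / 2 * (enorm (x - wj)) ^+ 2.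

Definition Qsol (phi : W -> R) (g : W -> W) (D : set W) (wj : W) (gam : R) (x : W) : Prop :=
  D x /\ forall y, D y -> qmodel phi g wj gam x <= qmodel phi g wj gam y.

Fixpoint maxhist (phi : W -> R) (w : nat -> W) (j k : nat) : R :=
  match k with
  | 0 => phi (w j)
  | k'.+1 => Num.max (maxhist phi w j k') (phi (w (j - k'.+1)%N))
  end.

Definition armijo (phi : W -> R) (g : W -> W) (sigma : R) (m : nat)
    (w : nat -> W) (j : nat) (x : W) : Prop :=
  phi x <= maxhist phi w j (minn j m) + sigma * dotw (g (w j)) (x - w j).

(* Sequences generated by Algorithm 1 up to outer iteration j:
   w k = w^k, g0 k = gamma_k^0, wi k i = w^{k,i} (i >= 1). *)
Definition alg_run (phi : W -> R) (g : W -> W) (D : set W)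
    (tau sigma gmin gmax : R) (m : nat)
    (w : nat -> W) (g0 : nat -> R) (wi : nat -> nat -> W) (j : nat) : Prop :=
  D (w 0%N) /\
  (forall k, (k <= j)%N ->
     gmin <= g0 k <= gmax /\
     forall i, (1 <= i)%N -> Qsol phi g D (w k) (tau ^+ i.-1 * g0 k) (wi k i)) /\
  (forall k, (k < j)%N -> exists ik, (1 <= ik)%N /\
     armijo phi g sigma m w k (wi k ik) /\
     (forall i, (1 <= i < ik)%N -> ~ armijo phi g sigma m w k (wi k i)) /\
     w k.+1 = wi k ik).

End Defs.

(* Fix the outer iterate x = w^j and write G = grad phi(x), c_k = tau^k gamma_j^0,
   y_k = w^{j,k+1}.  Two facts about the subproblem Q(x, c) are used:
   - comparing a solution y with the feasible point x gives the descent
     inequality <G, y - x> + c/2 |y - x|^2 <= 0, hence |y - x| <= 2|G|/c;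
   - the model is a shifted squared distance, so y is a projection of
     x - G/c onto D.
   If no trial point passes the Armijo test, then c_k -> oo and y_k -> x; the
   rejection inequality combined with a first-order expansion of phi at x
   gives c_k |y_k - x| -> 0.  Setting u_k = x - G/c_k -> x, the vectors
   c_k (u_k - y_k) lie in cone(u_k - Pi_D(u_k)) and converge to -G, which is
   M-stationarity; continuity of grad phi gives the residual convergence. *)
From Pilot Require Import Defs.
From HB Require Import structures.
From mathcomp Require Import all_boot all_order all_algebra.
From mathcomp Require Import all_classical all_reals all_analysis.
From mathcomp Require Import ring lra.
Import Order.TTheory GRing.Theory Num.Theory.
Import numFieldNormedType.Exports.
Set Implicit Arguments. Unset Strict Implicit.
Local Open Scope classical_set_scope.
Local Open Scope ring_scope.

Section Euclidean.
Variables (R : realType) (n : nat).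
Local Notation W := 'rV[R]_n.
Implicit Types (u v x : W).

Lemma dotwE u v : dotw u v = \sum_k u 0 k * v 0 k.
Proof. by rewrite /dotw !mxE; apply: eq_bigr => k _; rewrite mxE. Qed.

Lemma dotwC u v : dotw u v = dotw v u.
Proof. by rewrite !dotwE; apply: eq_bigr => k _; rewrite mulrC. Qed.

Lemma dotwDl u v x : dotw (u + v) x = dotw u x + dotw v x.
Proof. by rewrite !dotwE -big_split; apply: eq_bigr => k _; rewrite mxE mulrDl. Qed.

Lemma dotwDr u v x : dotw x (u + v) = dotw x u + dotw x v.
Proof. by rewrite dotwC dotwDl !(dotwC x). Qed.

Lemma dotwZl (c : R) u v : dotw (c *: u) v = c * dotw u v.
Proof. by rewrite !dotwE mulr_sumr; apply: eq_bigr => k _; rewrite mxE mulrA. Qed.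

Lemma dotwZr (c : R) u v : dotw u (c *: v) = c * dotw u v.
Proof. by rewrite dotwC dotwZl dotwC. Qed.

Lemma dotwNl u v : dotw (- u) v = - dotw u v.
Proof. by rewrite -scaleN1r dotwZl mulN1r. Qed.

Lemma dotwNr u v : dotw u (- v) = - dotw u v.
Proof. by rewrite dotwC dotwNl dotwC. Qed.

Lemma dotwBl u v x : dotw (u - v) x = dotw u x - dotw v x.
Proof. by rewrite dotwDl dotwNl. Qed.

Lemma dotwBr u v x : dotw x (u - v) = dotw x u - dotw x v.
Proof. by rewrite dotwDr dotwNr. Qed.

Lemma dotw0r u : dotw u 0 = 0.
Proof. by rewrite dotwE big1 // => k _; rewrite mxE mulr0. Qed.

Lemma dotw0l u : dotw 0 u = 0.
Proof. by rewrite dotwC dotw0r. Qed.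

Lemma dotw_ge0 u : 0 <= dotw u u.
Proof. by rewrite dotwE; apply: sumr_ge0 => k _; rewrite -expr2 sqr_ge0. Qed.

Lemma enorm_ge0 u : 0 <= enorm u.
Proof. exact: sqrtr_ge0. Qed.

Lemma enorm_sq u : enorm u ^+ 2 = dotw u u.
Proof. by rewrite sqr_sqrtr // dotw_ge0. Qed.

Lemma enorm_le u v : dotw u u <= dotw v v -> enorm u <= enorm v.
Proof. by move=> h; rewrite /enorm ler_sqrt // dotw_ge0. Qed.

Lemma enorm_leC u (c : R) : 0 <= c -> dotw u u <= c ^+ 2 -> enorm u <= c.
Proof. by move=> c0 h; rewrite /enorm -(ger0_norm c0) -sqrtr_sqr ler_sqrt // sqr_ge0. Qed.

Lemma enormZ (c : R) u : enorm (c *: u) = `|c| * enorm u.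
Proof. by rewrite /enorm dotwZl dotwZr mulrA -expr2 sqrtrM ?sqr_ge0 // sqrtr_sqr. Qed.

(* The library norm on matrices is the max-norm of the entries; it is
   equivalent to the Euclidean norm, which lets us transfer convergence. *)
Lemma entry_le_norm u k : `|u 0 k| <= `|u|.
Proof.
rewrite [leRHS]/Num.Def.normr /= mx_normrE.
exact: (le_bigmax _ (fun ij : 'I_1 * 'I_n => `|u ij.1 ij.2|) (0, k)).
Qed.

Lemma norm_le_enorm u : `|u| <= enorm u.
Proof.
rewrite [leLHS]/Num.Def.normr /= mx_normrE.
apply: bigmax_le => [|[i k] _]; first exact: enorm_ge0.
rewrite /= (ord1 i) -ler_sqr ?nnegrE ?enorm_ge0 // enorm_sq dotwE real_normK ?num_real //.
rewrite (bigD1 k) //= -expr2 lerDl; apply: sumr_ge0 => l _; rewrite -expr2 sqr_ge0 //.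
Qed.

Lemma enorm_le_norm u : enorm u <= n.+1%:R * `|u|.
Proof.
apply: enorm_leC; first by rewrite mulr_ge0.
rewrite dotwE (@le_trans _ _ (\sum_(k < n) `|u| ^+ 2)) //.
  apply: ler_sum => k _; rewrite -expr2 -real_normK ?num_real //.
  by rewrite ler_sqr ?nnegrE // entry_le_norm.
rewrite sumr_const card_ord exprMn -[X in X <= _]mulr_natl ler_wpM2r ?sqr_ge0 //.
by rewrite -natrX ler_nat (leq_trans (leqnSn n)) // expnS leq_pmulr ?expn_gt0.
Qed.

Lemma cvg_enorm (s : nat -> W) :
  s @ \oo --> (0 : W) <-> (fun i => enorm (s i)) @ \oo --> (0 : R).
Proof.
split => h; apply/cvgr0Pnorm_lt => e e0.
  have e1 : 0 < e / n.+1%:R by rewrite divr_gt0.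
  move/cvgr0Pnorm_lt: h => /(_ _ e1); apply: filterS => i hi.
  rewrite ger0_norm ?enorm_ge0 //; apply: (le_lt_trans (enorm_le_norm _)).
  by rewrite mulrC -ltr_pdivlMr.
move/cvgr0Pnorm_lt: h => /(_ _ e0); apply: filterS => i hi.
by apply: (le_lt_trans (norm_le_enorm _)); rewrite -[enorm _]ger0_norm ?enorm_ge0.
Qed.

End Euclidean.

Section Subproblem.
Variables (R : realType) (n : nat).
Local Notation W := 'rV[R]_n.
Variables (phi : W -> R) (g : W -> W) (D : set W) (x : W) (c : R).
Hypothesis c_gt0 : 0 < c.

Lemma qmodel_sqdist (y : W) :
  dotw (x - c^-1 *: g x - y) (x - c^-1 *: g x - y) =
  2 * c^-1 * (qmodel phi g x c y - phi x) + c^-1 ^+ 2 * dotw (g x) (g x).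
Proof.
have shifted_square (d : W) :
    dotw (- d - c^-1 *: g x) (- d - c^-1 *: g x) =
    2 * c^-1 * (dotw (g x) d + c / 2 * dotw d d) + c^-1 ^+ 2 * dotw (g x) (g x).
  rewrite !dotwBl !dotwBr !dotwNl !dotwNr !dotwZl !dotwZr (dotwC (g x) d).
  by field; exact: lt0r_neq0.
have -> : x - c^-1 *: g x - y = - (y - x) - c^-1 *: g x by rewrite opprB addrAC.
by rewrite shifted_square /qmodel enorm_sq; congr (_ * _ + _); ring.
Qed.

Lemma Qsol_proj (y : W) :
  Qsol phi g D x c y -> Defs.proj D (x - c^-1 *: g x) y.
Proof.
move=> [Dy ymin]; split=> // z Dz; apply: enorm_le.
rewrite !qmodel_sqdist lerD2r ler_wpM2l ?lerD2r ?ymin //.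
by rewrite mulr_ge0 // invr_ge0 ltW.
Qed.

(* Comparing a solution with the feasible center x. *)
Lemma Qsol_descent (y : W) : D x -> Qsol phi g D x c y ->
  dotw (g x) (y - x) + c / 2 * dotw (y - x) (y - x) <= 0.
Proof.
move=> Dx [_ /(_ x Dx)]; rewrite /qmodel !enorm_sq subrr dotw0r dotw0l.
lra.
Qed.

Lemma Qsol_step_bound (y : W) : D x -> Qsol phi g D x c y ->
  enorm (y - x) <= 2 * enorm (g x) / c.
Proof.
move=> Dx /(Qsol_descent Dx); set d := y - x => descent.
apply: enorm_leC; first by rewrite divr_ge0 ?mulr_ge0 ?enorm_ge0 ?ltW.
have square_ge0 := dotw_ge0 (g x + (c / 2) *: d).
rewrite !dotwDl !dotwDr !dotwZl !dotwZr (dotwC d) in square_ge0.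
have scaled_descent := ler_wpM2l (ltW c_gt0) descent; rewrite mulr0 in scaled_descent.
have cd_bound : c ^+ 2 * dotw d d <= 4 * dotw (g x) (g x).
  rewrite expr2; move: square_ge0 scaled_descent; set q := dotw d d.
  set s := dotw (g x) d; set G2 := dotw (g x) (g x); lra.
rewrite expr_div_n exprMn enorm_sq ler_pdivlMr ?exprn_gt0 // mulrC.
lra.
Qed.

End Subproblem.

Lemma rejected_step_bound (R : realType) (n : nat) (G d : 'rV[R]_n)
    (phix phiy c sigma eta : R) :
  0 < c -> sigma < 1 ->
  dotw G d + c / 2 * dotw d d <= 0 ->
  phix + sigma * dotw G d < phiy ->
  phiy - phix - dotw G d <= eta * enorm d ->
  (1 - sigma) * c * enorm d < 2 * eta.
Proof.
move=> c_gt0 sigma_lt1; rewrite -enorm_sq.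
have := enorm_ge0 d; set E := enorm d; set s := dotw G d => E_ge0 descent rejected taylor.
have slope : (1 - sigma) * (c / 2 * E ^+ 2) < eta * E.
  have : (1 - sigma) * (c / 2 * E ^+ 2) <= (1 - sigma) * - s.
    by rewrite ler_wpM2l; lra.
  lra.
have E_gt0 : 0 < E.
  by rewrite lt0r E_ge0 andbT; apply/eqP => E0; move: slope; rewrite E0; lra.
rewrite -(ltr_pM2r E_gt0); move: slope; rewrite expr2; lra.
Qed.

Lemma first_order_expansion (R : realType) (n : nat) (phi : 'rV[R]_n -> R)
    (G x : 'rV[R]_n) (d : nat -> 'rV[R]_n) (eta : R) :
  differentiable phi x -> (forall h, 'd phi x h = dotw G h) ->
  d @ \oo --> (0 : 'rV[R]_n) -> 0 < eta ->
  \forall k \near \oo, phi (d k + x) - phi x - dotw G (d k) <= eta * enorm (d k).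
Proof.
move=> dphi dphiE d_cvg0 eta_gt0.
have /eqaddoP /(_ _ eta_gt0) small_remainder := diff_locally dphi.
near=> k.
have : `|(phi \o shift x - (cst (phi x) + 'd phi x)) (d k)| <= eta * `|d k|.
  by near: k; exact: d_cvg0 _ small_remainder.
rewrite !fctE dphiE opprD addrA ler_norml => /andP[_ remainder_le].
exact: le_trans remainder_le (ler_wpM2l (ltW eta_gt0) (norm_le_enorm _)).
Unshelve. all: by end_near.
Qed.

Section InnerLoop.
Variables (R : realType) (n : nat).
Local Notation W := 'rV[R]_n.
Variables (phi : W -> R) (g : W -> W) (D : set W) (x : W).
Variables (c : nat -> R) (y : nat -> W).

Hypothesis Dx : D x.
Hypothesis c_gt0 : forall k, 0 < c k.
Hypothesis c_inv_cvg0 : (fun k => (c k)^-1) @ \oo --> (0 : R).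
Hypothesis Qy : forall k, Qsol phi g D x (c k) (y k).

(* The steps y_k - x are bounded by 2|G|/c_k, hence vanish. *)
Lemma steps_cvg0 : (fun k => y k - x) @ \oo --> (0 : W).
Proof.
apply/cvg_enorm.
apply: (@squeeze_cvgr _ _ _ _ (cst 0) (fun k => 2 * enorm (g x) * (c k)^-1)).
- by near=> k; rewrite /= enorm_ge0 /=; exact (Qsol_step_bound (c_gt0 k) Dx (Qy k)).
- exact: cvg_cst.
- by rewrite -(mulr0 (2 * enorm (g x))); apply: cvgM (cvg_cst _) c_inv_cvg0.
Unshelve. all: by end_near.
Qed.

Lemma trial_points_cvg : y @ \oo --> x.
Proof.
have -> : y = (fun k => (y k - x) + x) by apply/funext => k; rewrite subrK.
by rewrite -[X in _ --> X]add0r; apply: cvgD steps_cvg0 (cvg_cst x).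
Qed.

Lemma scaled_steps_cvg0 (sigma : R) :
  differentiable phi x -> (forall h, 'd phi x h = dotw (g x) h) -> sigma < 1 ->
  (forall k, phi x + sigma * dotw (g x) (y k - x) < phi (y k)) ->
  (fun k => c k *: (y k - x)) @ \oo --> (0 : W).
Proof.
move=> dphi dphiE sigma_lt1 rejected.
apply/cvg_enorm/cvgr0Pnorm_lt => e e_gt0.
have eta_gt0 : 0 < (1 - sigma) * e / 2 by rewrite divr_gt0 ?mulr_gt0 ?subr_gt0.
have := first_order_expansion dphi dphiE steps_cvg0 eta_gt0.
apply: filterS => k; rewrite subrK => taylor.
have := rejected_step_bound (c_gt0 k) sigma_lt1 (Qsol_descent Dx (Qy k))
  (rejected k) taylor.
have c_ge0 := ltW (c_gt0 k).
rewrite enormZ (ger0_norm c_ge0) ger0_norm ?mulr_ge0 ?enorm_ge0 //.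
have gap_gt0 : 0 < 1 - sigma by rewrite subr_gt0.
move=> /lt_le_trans bound; rewrite -(ltr_pM2l gap_gt0) mulrA; apply: bound.
by rewrite [2 * _]mulrC divfK // pnatr_eq0.
Qed.

Lemma residual_cvg0 :
  {for x, continuous g} -> (fun k => c k *: (y k - x)) @ \oo --> (0 : W) ->
  (fun k => c k *: (x - y k) + g (y k) - g x) @ \oo --> (0 : W).
Proof.
move=> g_cont scaled_cvg0.
have grad_cvg0 : (fun k => g (y k) - g x) @ \oo --> (0 : W).
  rewrite -(subrr (g x)); apply: cvgB (cvg_cst _).
  exact: continuous_cvg g_cont trial_points_cvg.
have -> : (fun k => c k *: (x - y k) + g (y k) - g x) =
          (fun k => - (c k *: (y k - x)) + (g (y k) - g x)).
  by apply/funext => k; rewrite -scalerN opprB addrA.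
by rewrite -[X in _ --> X]addr0 -[X in X + _]oppr0; apply: cvgD => //; apply: cvgN.
Qed.

(* The gradient steps u_k = x - G/c_k tend to x, y_k is a projection of u_k
   onto D, and c_k (u_k - y_k) -> -G: this exhibits -G as a limiting normal. *)
Lemma Mstationary_of_inner_loop :
  (fun k => c k *: (y k - x)) @ \oo --> (0 : W) -> Mstationary g D x.
Proof.
move=> scaled_cvg0; pose u k := x - (c k)^-1 *: g x.
exists (- g x); split; last by rewrite subrr.
exists u, (fun k => c k *: (u k - y k)); split; [|split].
- rewrite -[X in _ --> X]subr0 -(scale0r (g x)).
  by apply: cvgB (cvg_cst x) _; apply: cvgZ c_inv_cvg0 (cvg_cst _).
- have -> : (fun k => c k *: (u k - y k)) = (fun k => - (c k *: (y k - x)) - g x).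
    apply/funext => k; rewrite /u addrAC scalerDr scalerN scalerA divff ?gt_eqF //.
    by rewrite scale1r -scalerN opprB.
  by rewrite -[X in _ --> X]sub0r -oppr0; apply: cvgB (cvg_cst _); apply: cvgN.
- move=> k; exists (c k), (u k - y k); split; first exact: ltW.
  by split=> //; exists (y k) => //; exact: Qsol_proj.
Qed.

End InnerLoop.

Section Algorithm.
Variables (R : realType) (n : nat).
Local Notation W := 'rV[R]_n.
Variables (phi : W -> R) (g : W -> W) (D : set W).

Lemma alg_run_feasible (tau sigma gmin gmax : R) (m : nat)
    (w : nat -> W) (g0 : nat -> R) (wi : nat -> nat -> W) (j : nat) :
  alg_run phi g D tau sigma gmin gmax m w g0 wi j ->
  forall k, (k <= j)%N -> D (w k).
Proof.
move=> [Dw0 [Qsols accepted]]; elim=> [//|k IHk] ltkj.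
have [ik [ik_ge1 [_ [_ ->]]]] := accepted k ltkj.
by have [_ /(_ ik ik_ge1) []] := Qsols k (ltnW ltkj).
Qed.

Lemma maxhist_ge_current (w : nat -> W) (j k : nat) :
  phi (w j) <= maxhist phi w j k.
Proof. by elim: k => //= k IHk; rewrite le_max IHk. Qed.

Lemma rejected_trial_point (sigma : R) (m : nat) (w : nat -> W) (j : nat) (z : W) :
  ~ armijo phi g sigma m w j z ->
  phi (w j) + sigma * dotw (g (w j)) (z - w j) < phi z.
Proof.
rewrite /armijo => /negP; rewrite -ltNge; apply: le_lt_trans.
by rewrite lerD2r maxhist_ge_current.
Qed.

End Algorithm.

Lemma inv_geometric_cvg0 (R : realType) (tau a : R) :
  1 < tau -> 0 < a -> (fun k => (tau ^+ k * a)^-1) @ \oo --> (0 : R).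
Proof.
move=> tau_gt1 a_gt0.
have -> : (fun k => (tau ^+ k * a)^-1) = geometric a^-1 tau^-1.
  by apply/funext => k; rewrite /= invfM exprVn mulrC.
apply: cvg_geometric.
by rewrite ger0_norm ?invr_ge0 ?ltW ?(lt_trans ltr01) // invf_lt1 // (lt_trans ltr01).
Qed.

Unset Implicit Arguments. Set Strict Implicit.

Theorem mainTheorem3 (R : realType) (n : nat)
  (phi : 'rV[R]_n -> R) (g : 'rV[R]_n -> 'rV[R]_n) (D : set 'rV[R]_n)
  (tau sigma gmin gmax : R) (m : nat)
  (w : nat -> 'rV[R]_n) (g0 : nat -> R) (wi : nat -> nat -> 'rV[R]_n) (j : nat) :
  (forall x, differentiable phi x) ->
  (forall x h, 'd phi x h = dotw (g x) h) ->
  continuous g ->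
  closed D -> D !=set0 ->
  1 < tau -> 0 < sigma < 1 -> 0 < gmin -> gmin <= gmax ->
  alg_run phi g D tau sigma gmin gmax m w g0 wi j ->
  (exists i, (1 <= i)%N /\ armijo phi g sigma m w j (wi j i)) \/
  [/\ (fun i => enorm ((tau ^+ i.-1 * g0 j) *: (w j - wi j i)
                        + g (wi j i) - g (w j))) @ \oo --> (0 : R),
      (fun i => wi j i) @ \oo --> w j
    & Mstationary g D (w j)].
Proof.
move=> dphi dphiE g_cont _ _ tau_gt1 /andP[_ sigma_lt1] gmin_gt0 _ run.
have [|no_accept] := pselect (exists i, (1 <= i)%N /\ armijo phi g sigma m w j (wi j i)).
  by left.
right.
have Dx := alg_run_feasible run (leqnn j).
have [_ [Qsols _]] := run; have [/andP[gmin_le _] Qj] := Qsols j (leqnn j).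
(* Index the inner loop from 0: c k = gamma_{j,k+1} and y k = w^{j,k+1}. *)
pose c k := tau ^+ k * g0 j; pose y k := wi j k.+1.
have g0_gt0 : 0 < g0 j := lt_le_trans gmin_gt0 gmin_le.
have c_gt0 k : 0 < c k by rewrite mulr_gt0 ?exprn_gt0 // (lt_trans ltr01).
have c_inv_cvg0 := inv_geometric_cvg0 tau_gt1 g0_gt0.
have Qy k : Qsol phi g D (w j) (c k) (y k) by exact: Qj.
have rejected k : phi (w j) + sigma * dotw (g (w j)) (y k - w j) < phi (y k).
  apply: (rejected_trial_point (m := m)) => accepted.
  by apply: no_accept; exists k.+1.
have scaled_cvg0 := scaled_steps_cvg0 Dx c_gt0 c_inv_cvg0 Qy
  (dphi _) (dphiE _) sigma_lt1 rejected.
split.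
- rewrite -cvg_shiftS; apply/cvg_enorm.
  exact: (residual_cvg0 Dx c_gt0 c_inv_cvg0 Qy (g_cont _) scaled_cvg0).
- rewrite -cvg_shiftS; exact: trial_points_cvg Dx c_gt0 c_inv_cvg0 Qy.
- exact: Mstationary_of_inner_loop c_gt0 c_inv_cvg0 Qy scaled_cvg0.
Qed.
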